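(* Let $G\ne\{0\}$ be a locally balanced Hausdorff topological vector group over $\mathbb R$ and $d$ a metric on $G$ which is continuous as a map $G\times G\to\mathbb R$. If $G$ is not NSS, then there exists a sequence $(g_n)_{n\in\mathbb N}$ in $G$ such that $$0<\sup_{t\in\mathbb R}d(0,tg_1)<1,\qquad \sup_{t\in\mathbb R}d(0,tg_{n+1})<\tfrac14\sup_{t\in\mathbb R}d(0,tg_n)\quad(n=1,2,\dots).$$
   Context: A topological vector group over $\mathbb R$ is a topological abelian group $(G,+)$ which is also a real vector space (same addition) such that $x\mapsto tx$ is continuous for each $t\in\mathbb R$. A subset $A$ is balanced if $tA\subset A$ for all $|t|\le 1$. $G$ is locally balanced if the balanced neighborhoods of $0$ form a neighborhood base of $0$. $G$ is NSS if some neighborhood of $0$ contains no nontrivial subgroup. *)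

From Stdlib Require Import Reals.
Open Scope R_scope.

Definition is_topology {X : Type} (op : (X -> Prop) -> Prop) : Prop :=
  op (fun _ => True) /\ op (fun _ => False) /\
  (forall U V, op U -> op V -> op (fun x => U x /\ V x)) /\
  (forall F : (X -> Prop) -> Prop,
      (forall U, F U -> op U) -> op (fun x => exists U, F U /\ U x)).

Definition nbhd {X : Type} (op : (X -> Prop) -> Prop) (x : X) (N : X -> Prop) : Prop :=
  exists U, op U /\ U x /\ (forall y, U y -> N y).

Definition continuous_map {X Y : Type} (opX : (X -> Prop) -> Prop)
  (opY : (Y -> Prop) -> Prop) (f : X -> Y) : Prop :=
  forall V, opY V -> opX (fun x => V (f x)).

Definition prod_open {X Y : Type} (opX : (X -> Prop) -> Prop)
  (opY : (Y -> Prop) -> Prop) (W : X * Y -> Prop) : Prop :=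
  forall p, W p -> exists U V, opX U /\ opY V /\ U (fst p) /\ V (snd p) /\
    (forall a b, U a -> V b -> W (a, b)).

Definition R_open (U : R -> Prop) : Prop :=
  forall x, U x -> exists eps, 0 < eps /\ forall y, Rabs (y - x) < eps -> U y.

Definition hausdorff {X : Type} (op : (X -> Prop) -> Prop) : Prop :=
  forall x y, x <> y -> exists U V, op U /\ op V /\ U x /\ V y /\
    (forall z, U z -> V z -> False).

Definition is_real_vector_space {G : Type} (zero : G) (add : G -> G -> G)
  (opp : G -> G) (smul : R -> G -> G) : Prop :=
  (forall x y z, add x (add y z) = add (add x y) z) /\
  (forall x y, add x y = add y x) /\
  (forall x, add zero x = x) /\
  (forall x, add (opp x) x = zero) /\
  (forall a b x, smul a (smul b x) = smul (a * b) x) /\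
  (forall x, smul 1 x = x) /\
  (forall a x y, smul a (add x y) = add (smul a x) (smul a y)) /\
  (forall a b x, smul (a + b) x = add (smul a x) (smul b x)).

Definition is_top_vector_group {G : Type} (zero : G) (add : G -> G -> G)
  (opp : G -> G) (smul : R -> G -> G) (op : (G -> Prop) -> Prop) : Prop :=
  is_topology op /\
  is_real_vector_space zero add opp smul /\
  continuous_map (prod_open op op) op (fun p => add (fst p) (snd p)) /\
  continuous_map op op opp /\
  (forall t, continuous_map op op (smul t)).

Definition balanced {G : Type} (smul : R -> G -> G) (A : G -> Prop) : Prop :=
  forall t x, Rabs t <= 1 -> A x -> A (smul t x).

Definition locally_balanced {G : Type} (zero : G) (smul : R -> G -> G)
  (op : (G -> Prop) -> Prop) : Prop :=
  forall N, nbhd op zero N ->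
    exists B, nbhd op zero B /\ balanced smul B /\ (forall x, B x -> N x).

Definition is_subgroup {G : Type} (zero : G) (add : G -> G -> G) (opp : G -> G)
  (H : G -> Prop) : Prop :=
  H zero /\ (forall x y, H x -> H y -> H (add x y)) /\ (forall x, H x -> H (opp x)).

Definition NSS {G : Type} (zero : G) (add : G -> G -> G) (opp : G -> G)
  (op : (G -> Prop) -> Prop) : Prop :=
  exists U, nbhd op zero U /\
    forall H, is_subgroup zero add opp H -> (forall x, H x -> U x) ->
      forall x, H x -> x = zero.

Definition is_metric {X : Type} (d : X -> X -> R) : Prop :=
  (forall x y, 0 <= d x y) /\
  (forall x y, d x y = 0 <-> x = y) /\
  (forall x y, d x y = d y x) /\
  (forall x y z, d x z <= d x y + d y z).

Definition ray_dists {G : Type} (zero : G) (smul : R -> G -> G)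
  (d : G -> G -> R) (g : G) : R -> Prop :=
  fun r => exists t : R, r = d zero (smul t g).

From Stdlib Require Import Reals Lra Classical ClassicalEpsilon.
Open Scope R_scope.

(* Fix eps > 0.  By continuity of d, the ball
   {x | d(0,x) < eps} is a neighbourhood of 0; since G is locally balanced it
   contains a balanced neighbourhood B of 0, and since G is not NSS, B contains
   a subgroup H with some x <> 0.  H contains every integer multiple n x, and
   a balanced set containing all n x contains the whole line R x.  Hence the
   ray distances d(0, t x) are bounded by eps, so their supremum M exists, and
   0 < d(0, x) <= M <= eps.  Thus suprema of rays can be made positive and
   arbitrarily small; choosing them successively below 1/2 and below an eighth
   of the previous one yields the required rapidly decreasing sequence. *)

Section VectorSpace.
Variables (G : Type) (zero : G) (add : G -> G -> G) (opp : G -> G)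
  (smul : R -> G -> G).
Hypothesis Hv : is_real_vector_space zero add opp smul.

(* 0 x = 0: the additive cancellation argument from 0 x = 0 x + 0 x. *)
Lemma smul_0_l (x : G) : smul 0 x = zero.
Proof.
  destruct Hv as (Hass & _ & H0 & Hopp & _ & _ & _ & Hdistr).
  assert (Hdup : smul 0 x = add (smul 0 x) (smul 0 x)).
  { rewrite <- Hdistr. f_equal. ring. }
  transitivity (add (add (opp (smul 0 x)) (smul 0 x)) (smul 0 x)).
  - rewrite Hopp, H0. reflexivity.
  - rewrite <- Hass, <- Hdup. apply Hopp.
Qed.

Lemma subgroup_nat_multiple (H : G -> Prop) (x : G) :
  is_subgroup zero add opp H -> H x -> forall n : nat, H (smul (INR n) x).
Proof.
  destruct Hv as (_ & _ & _ & _ & _ & H1 & _ & Hdistr).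
  intros (Hz & Hadd & _) Hx n. induction n as [|n IH].
  - rewrite smul_0_l. exact Hz.
  - rewrite S_INR, Hdistr, H1. apply Hadd; assumption.
Qed.

(* A balanced set containing all natural multiples of x contains the whole
   line R x: t x = (t/m)(m x) with m > |t|. *)
Lemma balanced_line (B : G -> Prop) (x : G) :
  balanced smul B -> (forall n : nat, B (smul (INR n) x)) ->
  forall t, B (smul t x).
Proof.
  destruct Hv as (_ & _ & _ & _ & Hsmul & _).
  intros Hbal Hmult t.
  destruct (INR_unbounded (Rabs t)) as [m Hm].
  pose proof (Rabs_pos t) as Habs.
  replace (smul t x) with (smul (t / INR m) (smul (INR m) x)).
  2:{ rewrite Hsmul. f_equal. field. lra. }
  apply Hbal; [|apply Hmult].
  unfold Rdiv. rewrite Rabs_mult, Rabs_inv, (Rabs_right (INR m)) by lra.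
  apply (Rmult_le_reg_r (INR m)); [lra|].
  rewrite Rmult_assoc, Rinv_l by lra. lra.
Qed.

End VectorSpace.

Lemma not_NSS_small_subgroup (G : Type) (zero : G) (add : G -> G -> G)
  (opp : G -> G) (op : (G -> Prop) -> Prop) (N : G -> Prop) :
  ~ NSS zero add opp op -> nbhd op zero N ->
  exists (H : G -> Prop) (x : G),
    is_subgroup zero add opp H /\ (forall y, H y -> N y) /\ H x /\ x <> zero.
Proof.
  intros HnotNSS HN. apply NNPP; intro Hnone. apply HnotNSS.
  exists N. split; [exact HN|].
  intros H HH Hsub x Hx. apply NNPP; intro Hne.
  apply Hnone. exists H, x. auto.
Qed.

Lemma metric_ball_nbhd (X : Type) (op : (X -> Prop) -> Prop) (d : X -> X -> R)
  (a : X) (eps : R) :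
  is_metric d ->
  continuous_map (prod_open op op) R_open (fun p => d (fst p) (snd p)) ->
  0 < eps -> nbhd op a (fun x => d a x < eps).
Proof.
  intros (_ & Hzero & _) Hdc Heps.
  assert (Hopen : R_open (fun r => r < eps)).
  { intros r Hr. exists (eps - r). split; [lra|].
    intros s Hs. apply Rabs_def2 in Hs. lra. }
  assert (Haa : d a a < eps) by (rewrite (proj2 (Hzero a a) eq_refl); lra).
  destruct (Hdc _ Hopen (a, a) Haa) as (U & V & _ & HV & HUa & HVa & HUV).
  exists V. repeat split; [exact HV | exact HVa |].
  intros y Hy. exact (HUV a y HUa Hy).
Qed.

Lemma ray_sup_small (G : Type) (zero : G) (smul : R -> G -> G)
  (d : G -> G -> R) (x : G) (eps : R) :
  is_metric d -> smul 1 x = x -> x <> zero ->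
  (forall t, d zero (smul t x) < eps) ->
  exists M, is_lub (ray_dists zero smul d x) M /\ 0 < M /\ M <= eps.
Proof.
  intros (Hpos & Hzero & _) H1 Hne Hray.
  assert (Hbound : bound (ray_dists zero smul d x)).
  { exists eps. intros r [t ->]. left. apply Hray. }
  assert (Hinh : exists r, ray_dists zero smul d x r).
  { exists (d zero (smul 1 x)), 1. reflexivity. }
  destruct (completeness _ Hbound Hinh) as [M HM].
  exists M. split; [exact HM | split].
  - assert (Hdx : 0 < d zero x).
    { destruct (Hpos zero x) as [Hlt | Heq]; [exact Hlt |].
      exfalso. apply Hne. symmetry. apply Hzero. auto. }
    assert (d zero x <= M) by (apply (proj1 HM); exists 1; rewrite H1; reflexivity).
    lra.
  - apply (proj2 HM). intros r [t ->]. left. apply Hray.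
Qed.

Lemma small_ray_sup (G : Type) (zero : G) (add : G -> G -> G) (opp : G -> G)
  (smul : R -> G -> G) (op : (G -> Prop) -> Prop) (d : G -> G -> R)
  (HG : is_top_vector_group zero add opp smul op)
  (Hlb : locally_balanced zero smul op)
  (Hd : is_metric d)
  (Hdc : continuous_map (prod_open op op) R_open (fun p => d (fst p) (snd p)))
  (HnotNSS : ~ NSS zero add opp op) (eps : R) :
  0 < eps ->
  exists x M, is_lub (ray_dists zero smul d x) M /\ 0 < M /\ M <= eps.
Proof.
  intros Heps. destruct HG as (_ & Hv & _).
  destruct (Hlb _ (metric_ball_nbhd G op d zero eps Hd Hdc Heps))
    as (B & HB & Hbal & HBball).
  destruct (not_NSS_small_subgroup G zero add opp op B HnotNSS HB)
    as (H & x & HH & HHB & Hx & Hne).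
  assert (Hline : forall t, B (smul t x)).
  { apply (balanced_line G zero add opp smul Hv B x Hbal).
    intro n. apply HHB. exact (subgroup_nat_multiple G zero add opp smul Hv H x HH Hx n). }
  assert (Hunit : smul 1 x = x) by (destruct Hv as (_ & _ & _ & _ & _ & H1 & _); apply H1).
  destruct (ray_sup_small G zero smul d x eps Hd Hunit Hne (fun t => HBball _ (Hline t)))
    as (M & HM).
  exists x, M. exact HM.
Qed.

(* The next target
   is M_n / 8, which leaves room for the strict inequality. *)
Lemma rapidly_decreasing_witnesses (A : Type) (P : A -> R -> Prop) :
  (forall eps, 0 < eps -> exists a M, P a M /\ 0 < M /\ M <= eps) ->
  exists (g : nat -> A) (M : nat -> R),
    (forall n, P (g n) (M n)) /\ 0 < M 0%nat /\ M 0%nat < 1 /\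
    (forall n, M (S n) < M n / 4).
Proof.
  intros Hsmall.
  destruct (Hsmall 1 Rlt_0_1) as (a0 & _).
  set (Q := fun eps (p : A * R) =>
         0 < eps -> P (fst p) (snd p) /\ 0 < snd p /\ snd p <= eps).
  assert (HQ : forall eps, exists p, Q eps p).
  { intro eps. destruct (Rlt_dec 0 eps) as [Heps | Heps].
    - destruct (Hsmall eps Heps) as (a & M & HM). exists (a, M). intros _. exact HM.
    - exists (a0, 0). intro; lra. }
  set (pick := fun eps => proj1_sig (constructive_indefinite_description _ (HQ eps))).
  assert (Hpick : forall eps, Q eps (pick eps)) by (intro; apply proj2_sig).
  set (target := fix target (n : nat) : R :=
         match n with O => 1/2 | S k => snd (pick (target k)) / 8 end).
  assert (Htarget : forall n, 0 < target n).
  { induction n as [|n IH]; simpl; [lra |].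
    destruct (Hpick _ IH) as (_ & Hpos & _). lra. }
  exists (fun n => fst (pick (target n))), (fun n => snd (pick (target n))).
  split; [| split; [| split]].
  - intro n. apply (Hpick _ (Htarget n)).
  - apply (Hpick _ (Htarget 0%nat)).
  - destruct (Hpick _ (Htarget 0%nat)) as (_ & _ & Hle). simpl in Hle |- *. lra.
  - intro n. destruct (Hpick _ (Htarget (S n))) as (_ & _ & Hle).
    destruct (Hpick _ (Htarget n)) as (_ & Hpos & _). simpl in Hle |- *. lra.
Qed.

Theorem lemma7p6 (G : Type) (zero : G) (add : G -> G -> G) (opp : G -> G)
  (smul : R -> G -> G) (op : (G -> Prop) -> Prop) (d : G -> G -> R)
  (HG : is_top_vector_group zero add opp smul op)
  (Hhaus : hausdorff op)
  (Hlb : locally_balanced zero smul op)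
  (Hnz : exists x : G, x <> zero)
  (Hd : is_metric d)
  (Hdc : continuous_map (prod_open op op) R_open (fun p => d (fst p) (snd p)))
  (HnotNSS : ~ NSS zero add opp op) :
  exists (g : nat -> G) (M : nat -> R),
    (forall n, is_lub (ray_dists zero smul d (g n)) (M n)) /\
    0 < M 0%nat /\ M 0%nat < 1 /\
    (forall n, M (S n) < M n / 4).
Proof.
  apply (rapidly_decreasing_witnesses G (fun x M => is_lub (ray_dists zero smul d x) M)).
  exact (small_ray_sup G zero add opp smul op d HG Hlb Hd Hdc HnotNSS).
Qed.
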